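(* Let $M,N$ be hyperbolic surfaces with $W_M=W_N$, and let $l\in L_0$. Then $$\bigl|\, l\,P_{\mathrm{odd}} \cap (L_0\setminus\{l\})\,\mathbb{N}^+ \bigr| \le |L_0|-1,$$ i.e. at most $|L_0|-1$ of the numbers $pl$, $p$ an odd prime, are positive integer multiples of an element of $L_0$ other than $l$.
   Context: A hyperbolic surface is a compact Riemannian 2-manifold without boundary of constant curvature $-1$, possibly non-orientable or disconnected; geodesics are oriented closed geodesics. For a geodesic $\gamma$ with length $l(\gamma)$ and imprimitivity index $\nu(\gamma)$, set $\mathrm{wt}(\gamma)=1/\nu(\gamma)$ if $\gamma$ is orientation-preserving and $\mathrm{wt}(\gamma)=\frac1{\nu(\gamma)}\tanh(l(\gamma)/2)$ if orientation-reversing; $W_M(l)=\sum_{l(\gamma)=l}\mathrm{wt}(\gamma)$. Let $\alpha_M(l)$ (resp. $\beta_M(l)$) be the number of primitive orientation-preserving (resp. orientation-reversing) geodesics of $M$ of length exactly $l$; $a(l)=\alpha_M(l)-\alpha_N(l)$, $b(l)=\beta_N(l)-\beta_M(l)$; $L=\{l>0: a(l)\neq0\text{ or }b(l)\neq0\}$; $L_0=\{l\in L: l\text{ is not of the form } kl' \text{ with } l'\in L,\ l'\neq l,\ k\in\mathbb{N}^+\}$. $P_{\mathrm{odd}}$ is the set of odd primes, $lP_{\mathrm{odd}}=\{lp: p\in P_{\mathrm{odd}}\}$, and $(L_0\setminus\{l\})\mathbb{N}^+=\{kl' : l'\in L_0\setminus\{l\},\ k\in\mathbb{N}^+\}$.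 *)

From Stdlib Require Import Reals Lra Lia ZArith Znumtheory List.
From Coquelicot Require Import Coquelicot.
Open Scope R_scope.

(* A closed hyperbolic surface M enters the statement only through its
   primitive closed geodesics, recorded by their counting functions:
     alpha M l = number of primitive orientation-preserving geodesics of length l,
     beta  M l = number of primitive orientation-reversing geodesics of length l. *)
Record surface := {
  alpha : R -> nat;
  beta : R -> nat;
  spec_pos : forall l, (alpha l + beta l <> 0)%nat -> 0 < l;
  spec_discrete : forall T, exists s : list R,
      forall l, (alpha l + beta l <> 0)%nat -> l <= T -> In l s
}.

(* Contribution to W_M(l) of the geodesics delta^k (k >= 1, nu = k) with delta
   primitive of length l/k: delta^k is orientation-reversing iff delta is and
   k is odd; its weight is 1/k, times tanh(l/2) if orientation-reversing. *)
Definition W_term (M : surface) (l : R) (k : nat) : R :=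
  let x := l / INR k in
  (INR (alpha M x) + INR (beta M x) * (if Nat.odd k then tanh (l / 2) else 1))
  / INR k.

(* W_M(l) = sum over all closed geodesics gamma of length l of wt(gamma)
   (a finite sum, since only finitely many k give a nonzero term). *)
Definition W (M : surface) (l : R) : R :=
  Series (fun n => W_term M l (S n)).

Definition a_diff (M N : surface) (l : R) : Z :=
  (Z.of_nat (alpha M l) - Z.of_nat (alpha N l))%Z.
Definition b_diff (M N : surface) (l : R) : Z :=
  (Z.of_nat (beta N l) - Z.of_nat (beta M l))%Z.

Definition Lset (M N : surface) (l : R) : Prop :=
  0 < l /\ (a_diff M N l <> 0%Z \/ b_diff M N l <> 0%Z).

Definition L0set (M N : surface) (l : R) : Prop :=
  Lset M N l /\
  ~ (exists l' (k : nat), Lset M N l' /\ l' <> l /\ (1 <= k)%nat /\ l = INR k * l').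

Definition odd_prime (p : nat) : Prop := prime (Z.of_nat p) /\ Nat.odd p = true.

Definition bad_set (M N : surface) (l : R) (x : R) : Prop :=
  (exists p : nat, odd_prime p /\ x = l * INR p) /\
  (exists l' (k : nat), L0set M N l' /\ l' <> l /\ (1 <= k)%nat /\ x = INR k * l').

From Stdlib Require Import Reals List.
From Coquelicot Require Import Coquelicot.
From Stdlib Require Import Lra Lia ZArith Znumtheory.
Open Scope R_scope.

(* Every x = l p in the set lies over some l' in L_0 \ {l}, and this l'
   determines p: from l p = k l' and l p' = k' l' with p <> p' one gets
   p k' = p' k, so p divides k and l = (k / p) l', contradicting l in L_0.
   Hence x |-> l' is injective into L_0 \ {l}. *)

Lemma NoDup_length_le_rel {A B : Type} (eq_dec : forall y y' : B, {y = y'} + {y <> y'})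
    (rel : A -> B -> Prop) (s : list A) (t : list B) :
  NoDup s ->
  (forall x, In x s -> exists y, In y t /\ rel x y) ->
  (forall x x' y, rel x y -> rel x' y -> x = x') ->
  (length s <= length t)%nat.
Proof.
  intros Hs; revert t; induction Hs as [|x s Hx Hs IH]; intros t Hcover Hinj; simpl; [lia|].
  destruct (Hcover x (or_introl eq_refl)) as [y [Hy Hxy]].
  assert (Hrest : (length s <= length (remove eq_dec y t))%nat).
  { apply IH; [|exact Hinj].
    intros x' Hx'; destruct (Hcover x' (or_intror Hx')) as [y' [Hy' Hxy']].
    exists y'; split; [|exact Hxy'].
    apply in_in_remove; [|exact Hy'].
    intros ->; apply Hx; rewrite <- (Hinj x' x y Hxy' Hxy); exact Hx'. }
  pose proof (remove_length_lt eq_dec t y Hy); lia.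
Qed.

Lemma prime_dvd_of_mul_eq (p p' k k' : nat) :
  prime (Z.of_nat p) -> prime (Z.of_nat p') -> p <> p' ->
  (p * k' = p' * k)%nat -> exists m : nat, k = (m * p)%nat.
Proof.
  intros Hp Hp' Hne Heq.
  assert (Hdvd : (Z.of_nat p | Z.of_nat p' * Z.of_nat k)%Z).
  { exists (Z.of_nat k'); lia. }
  destruct (prime_mult _ Hp _ _ Hdvd) as [Hpp' | [m Hm]].
  - exfalso; apply Hne, Nat2Z.inj, prime_div_prime; assumption.
  - assert (Hp1 : (1 < Z.of_nat p)%Z) by (destruct Hp; assumption).
    exists (Z.to_nat m); nia.
Qed.

Section BadSet.

Variables (M N : surface) (l : R).
Hypothesis Hl : L0set M N l.

Lemma L0set_pos : 0 < l.
Proof. exact (proj1 (proj1 Hl)). Qed.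

Lemma odd_prime_unique_over (p p' k k' : nat) (l' : R) :
  odd_prime p -> odd_prime p' -> Lset M N l' -> l' <> l -> (1 <= k)%nat ->
  l * INR p = INR k * l' -> l * INR p' = INR k' * l' -> p = p'.
Proof.
  intros [Hp _] [Hp' _] Hl' Hne Hk E E'.
  destruct (Nat.eq_dec p p') as [|Hpp']; [assumption|exfalso].
  assert (Hmul : (p * k' = p' * k)%nat).
  { apply INR_eq; rewrite !mult_INR.
    apply Rmult_eq_reg_l with l; [|pose proof L0set_pos; lra].
    transitivity ((l * INR p) * INR k'); [ring|].
    transitivity ((l * INR p') * INR k); [|ring].
    rewrite E, E'; ring. }
  destruct (prime_dvd_of_mul_eq p p' k k' Hp Hp' Hpp' Hmul) as [m ->].
  apply (proj2 Hl); exists l', m; split; [exact Hl'|split; [exact Hne|split]].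
  - destruct m; [simpl in Hk; lia|lia].
  - assert (Hp0 : 0 < INR p) by (apply lt_0_INR; destruct Hp; lia).
    apply Rmult_eq_reg_r with (INR p); [|lra].
    rewrite E, mult_INR; ring.
Qed.

Definition lies_over (x l' : R) : Prop :=
  exists (p k : nat), odd_prime p /\ x = l * INR p /\
    L0set M N l' /\ l' <> l /\ (1 <= k)%nat /\ x = INR k * l'.

Lemma bad_set_lies_over (x : R) :
  bad_set M N l x -> exists l', L0set M N l' /\ l' <> l /\ lies_over x l'.
Proof.
  intros [[p [Hp Ep]] [l' [k [Hl' [Hne [Hk Ek]]]]]].
  exists l'; split; [exact Hl'|split; [exact Hne|]].
  exists p, k; exact (conj Hp (conj Ep (conj Hl' (conj Hne (conj Hk Ek))))).
Qed.

Lemma lies_over_injective (x x' l' : R) :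
  lies_over x l' -> lies_over x' l' -> x = x'.
Proof.
  intros [p [k [Hp [Ep [[Hl' _] [Hne [Hk Ek]]]]]]] [p' [k' [Hp' [Ep' [_ [_ [_ Ek']]]]]]].
  rewrite Ep, Ep'; f_equal; f_equal.
  apply (odd_prime_unique_over p p' k k' l'); congruence.
Qed.

End BadSet.

Theorem lemma2 (M N : surface)
  (HW : forall t : R, W M t = W N t)
  (l : R) (Hl : L0set M N l) :
  forall s0 : list R, NoDup s0 -> (forall x, In x s0 <-> L0set M N x) ->
  forall s : list R, NoDup s -> (forall x, In x s -> bad_set M N l x) ->
  (length s <= length s0 - 1)%nat.
Proof.
  intros s0 _ Hs0 s Hs Hbad.
  assert (Hle : (length s <= length (remove Req_EM_T l s0))%nat).
  { apply (NoDup_length_le_rel Req_EM_T (lies_over M N l)); [exact Hs| |].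
    - intros x Hx.
      destruct (bad_set_lies_over M N l x (Hbad x Hx)) as [l' [Hl' [Hne Hover]]].
      exists l'; split; [apply in_in_remove; [exact Hne|apply Hs0; exact Hl']|exact Hover].
    - exact (lies_over_injective M N l Hl). }
  pose proof (remove_length_lt Req_EM_T s0 l (proj2 (Hs0 l) Hl)); lia.
Qed.
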